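(* Let $a,b\in\overline{{}^\bullet\mathbb{R}}$ and let $J$ be a non-infinitesimal interval of ${}^\bullet\mathbb{R}$ with endpoints $a,b$. Let $f:J\to{}^\bullet\mathbb{R}$ be a smooth function. Then there exist $\delta\in\mathbb{R}_{>0}$ and a smooth function $\bar f:(a-\delta,b+\delta)\to{}^\bullet\mathbb{R}$ such that $\bar f|_J=f$.
   Context: Fermat reals: let $\mathbb{R}_o[t]$ be the set of maps $x:\mathbb{R}_{\ge0}\to\mathbb{R}$, $t\mapsto x_t$, of the form $x_t=r+\sum_{i=1}^k\alpha_i t^{a_i}+o(t)$ as $t\to0^+$, with $k\in\mathbb{N}$, $r,\alpha_i\in\mathbb{R}$, $a_i\in\mathbb{R}_{\ge0}$. Write $x\sim y$ iff $x_t=y_t+o(t)$ as $t\to0^+$. The ring of Fermat reals is ${}^\bullet\mathbb{R}:=\mathbb{R}_o[t]/\sim$ with pointwise operations; $\mathbb{R}\subseteq{}^\bullet\mathbb{R}$ via constants. The standard part of $x=[x_t]$ is ${}^\circ x:=x_0$. ${}^\bullet\mathbb{R}$ is totally ordered by: $x\le y$ iff for representatives there is $z\in\mathbb{R}_o[t]$ with $z\sim0$ and $x_t\le y_t+z_t$ for all small $t\ge0$. $\overline{{}^\bullet\mathbb{R}}:={}^\bullet\mathbb{R}\cup\{\pm\infty\}$ with the usual operations ($\pm\infty\mp\delta=\pm\infty$) and ${}^\circ(\pm\infty):=\pm\infty$. An interval is a set $[a,b],(a,b),[a,b),(a,b]$ of points of ${}^\bullet\mathbb{R}$ with $a\le b$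 in $\overline{{}^\bullet\mathbb{R}}$; non-infinitesimal if ${}^\circ a<{}^\circ b$. The Fermat topology on ${}^\bullet\mathbb{R}^n$ has open sets ${}^\bullet V:=\{x:{}^\circ x\in V\}$, $V\subseteq\mathbb{R}^n$ open. For $\alpha\in C^\infty(W,\mathbb{R}^m)$, $W\subseteq\mathbb{R}^d$ open, ${}^\bullet\alpha([x_t]):=[\alpha(x_t)]$ on ${}^\bullet W$. A map $f:S\to{}^\bullet\mathbb{R}^m$, $S\subseteq{}^\bullet\mathbb{R}^n$, is smooth (quasi-standard smooth) if for every $x\in S$ there exist open $V\subseteq\mathbb{R}^n$ with $x\in{}^\bullet V$, open $P\subseteq\mathbb{R}^{\mathsf p}$, $p\in{}^\bullet P$ and $\alpha\in C^\infty(P\times V,\mathbb{R}^m)$ with $f(y)={}^\bullet\alpha(p,y)$ for all $y\in{}^\bullet V\cap S$. *)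

From Stdlib Require Import Reals ClassicalEpsilon FunctionalExtensionality.
From mathcomp Require Import ssreflect ssrfun ssrbool eqtype ssrnat fintype.

Set Implicit Arguments.
Unset Strict Implicit.

Local Open Scope R_scope.

(* t^a for t >= 0, a >= 0, with 0^0 = 1 and 0^a = 0 for a > 0 *)
Definition rpow (t a : R) : R :=
  match Rlt_dec 0 t with
  | left _ => Rpower t a
  | right _ => if Req_EM_T a 0 then 1 else 0
  end.

Definition little_o (w : R -> R) : Prop :=
  forall eps, 0 < eps -> exists d, 0 < d /\
    forall t, 0 <= t -> t < d -> Rabs (w t) <= eps * t.

Fixpoint psum (k : nat) (al a : nat -> R) (t : R) : R :=
  match k with
  | O => 0
  | S k' => psum k' al a t + al k' * rpow t (a k')
  end.

Definition Ro (x : R -> R) : Prop :=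
  exists (k : nat) (r : R) (al a : nat -> R),
    (forall i, (i < k)%N -> 0 <= a i) /\
    little_o (fun t => x t - (r + psum k al a t)).

Definition req (x y : R -> R) : Prop := little_o (fun t => x t - y t).

Definition FR : Type :=
  { C : (R -> R) -> Prop | exists x, Ro x /\ C = (fun y => Ro y /\ req y x) }.

Definition mkFR (x : R -> R) (H : Ro x) : FR :=
  exist _ (fun y => Ro y /\ req y x) (ex_intro _ x (conj H (erefl _))).

Definition rep (X : FR) (x : R -> R) : Prop := Ro x /\ proj1_sig X x.

Definition repr (X : FR) : R -> R :=
  proj1_sig (constructive_indefinite_description _ (proj2_sig X)).

Lemma repr_Ro (X : FR) : Ro (repr X).
Proof.
rewrite /repr; case: constructive_indefinite_description => x [Hx _] //.
Qed.

Definition std (X : FR) : R := repr X 0.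

Lemma Ro_shift (x : R -> R) (d : R) : Ro x -> Ro (fun t => x t - d).
Proof.
move=> [k [r [al [a [Ha Ho]]]]].
exists k, (r - d), al, a; split => //.
have -> : (fun t => x t - d - (r - d + psum k al a t)) =
          (fun t => x t - (r + psum k al a t)).
  by apply: FunctionalExtensionality.functional_extensionality => t; ring.
exact: Ho.
Qed.

Definition FRsub_real (X : FR) (d : R) : FR :=
  mkFR (Ro_shift d (repr_Ro X)).

Definition FRle (X Y : FR) : Prop :=
  exists x y z, rep X x /\ rep Y y /\ Ro z /\ req z (fun _ => 0) /\
    exists d, 0 < d /\ forall t, 0 <= t -> t < d -> x t <= y t + z t.

Definition FRlt (X Y : FR) : Prop := FRle X Y /\ X <> Y.

Inductive FRbar : Type := Fin of FR | PInf | MInf.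

Definition FRbar_le (a b : FRbar) : Prop :=
  match a, b with
  | MInf, _ => True
  | _, PInf => True
  | Fin x, Fin y => FRle x y
  | _, _ => False
  end.

Definition FRbar_lt (a b : FRbar) : Prop := FRbar_le a b /\ a <> b.

Definition FRbar_sub_real (a : FRbar) (d : R) : FRbar :=
  match a with Fin x => Fin (FRsub_real x d) | _ => a end.
Definition FRbar_add_real (a : FRbar) (d : R) : FRbar :=
  FRbar_sub_real a (- d).

Definition std_lt (a b : FRbar) : Prop :=
  match a, b with
  | Fin x, Fin y => std x < std y
  | MInf, Fin _ | MInf, PInf | Fin _, PInf => True
  | _, _ => False
  end.

Inductive ikind : Type := CC | OO | CO | OC.

Definition interval (k : ikind) (a b : FRbar) (x : FR) : Prop :=
  match k with
  | CC => FRbar_le a (Fin x) /\ FRbar_le (Fin x) b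
  | OO => FRbar_lt a (Fin x) /\ FRbar_lt (Fin x) b
  | CO => FRbar_le a (Fin x) /\ FRbar_lt (Fin x) b
  | OC => FRbar_lt a (Fin x) /\ FRbar_le (Fin x) b
  end.

Definition noninf_interval (J : FR -> Prop) (a b : FRbar) : Prop :=
  FRbar_le a b /\ std_lt a b /\ exists k, J = interval k a b.

Definition vec (N : nat) := 'I_N -> R.

Definition open_R (V : R -> Prop) : Prop :=
  forall r, V r -> exists e, 0 < e /\ forall s, Rabs (s - r) < e -> V s.

Definition open_vec (N : nat) (U : vec N -> Prop) : Prop :=
  forall z, U z -> exists e, 0 < e /\
    forall w : vec N, (forall i, Rabs (w i - z i) < e) -> U w.

Definition upd (N : nat) (z : vec N) (i : 'I_N) (s : R) : vec N :=
  fun j => if j == i then s else z j.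

Definition has_partial (N : nat) (g : vec N -> R) (i : 'I_N) (z : vec N) (l : R) :=
  derivable_pt_lim (fun s => g (upd z i s)) (z i) l.

Definition continuous_on_vec (N : nat) (U : vec N -> Prop) (F : vec N -> R) :=
  forall z, U z -> forall eps, 0 < eps -> exists d, 0 < d /\
    forall w, U w -> (forall i, Rabs (w i - z i) < d) -> Rabs (F w - F z) < eps.

(* g is C^oo on the open set U: all iterated partial derivatives
   D (i1 :: ... :: ik :: nil) = d_i1 ... d_ik g exist and are continuous on U *)
Definition smooth_vec (N : nat) (U : vec N -> Prop) (g : vec N -> R) : Prop :=
  exists D : list 'I_N -> vec N -> R,
    (forall z, U z -> D nil z = g z) /\
    (forall l i z, U z -> has_partial (D l) i z (D (cons i l) z)) /\
    (forall l, continuous_on_vec U (D l)).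

Definition smooth_prod (p : nat) (P : vec p -> Prop) (V : R -> Prop)
  (al : vec p -> R -> R) : Prop :=
  smooth_vec (fun z : vec p.+1 => P (fun i => z (widen_ord (leqnSn p) i)) /\ V (z ord_max))
             (fun z : vec p.+1 => al (fun i => z (widen_ord (leqnSn p) i)) (z ord_max)).

Definition ext_eq (p : nat) (al : vec p -> R -> R) (q : 'I_p -> FR) (y : FR) (Z : FR) :=
  forall (qs : 'I_p -> R -> R) (ys : R -> R),
    (forall i, rep (q i) (qs i)) -> rep y ys ->
    rep Z (fun t => al (fun i => qs i t) (ys t)).

(* f : S -> FR is (quasi-standard) smooth, for S a subset of FR (n = m = 1);
   f is given as a total function whose values outside S are irrelevant *)
Definition smooth_on (S : FR -> Prop) (f : FR -> FR) : Prop :=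
  forall x, S x ->
    exists (V : R -> Prop) (p : nat) (P : vec p -> Prop) (q : 'I_p -> FR)
           (al : vec p -> R -> R),
      open_R V /\ V (std x) /\ open_vec P /\ P (fun i => std (q i)) /\
      smooth_prod P V al /\
      forall y, V (std y) -> S y -> ext_eq al q y (f y).

From Stdlib Require Import Reals Lra ClassicalEpsilon FunctionalExtensionality.
From mathcomp Require Import ssreflect ssrfun ssrbool eqtype ssrnat fintype.

(* Near a finite endpoint A of J, the chart of f at a point of J infinitely close to A
   (such as A + dt^(1/2)) lives on a whole standard neighbourhood of std A; there it already
   describes f on J, and the Fermat extension of its smooth map defines fbar off J.  A point
   of the enlarged interval away from both endpoints lies in J, where fbar = f.  The values of
   these extensions are Fermat reals because composing a smooth map with elements of R_o[t]
   stays in R_o[t] and respects ~: expanding one coordinate at a time by Taylor's formula,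
   the remainder is o(t) since infinitesimal Fermat reals are nilpotent. *)

Set Implicit Arguments.
Unset Strict Implicit.

Local Open Scope R_scope.

(** * Real powers *)

Lemma rpow_pos t a : 0 < t -> rpow t a = Rpower t a.
Proof. by rewrite /rpow; case: Rlt_dec. Qed.

Lemma rpow_0 a : 0 < a -> rpow 0 a = 0.
Proof. by move=> a_pos; rewrite /rpow; case: Rlt_dec => [|_]; [lra | case: Req_EM_T => [?|//]; lra]. Qed.

Lemma rpow_exp0 t : rpow t 0 = 1.
Proof.
rewrite /rpow; case: Rlt_dec => [t_pos|_]; first exact: Rpower_O.
by case: Req_EM_T.
Qed.

Lemma rpow_ge0 t a : 0 <= rpow t a.
Proof.
rewrite /rpow; case: Rlt_dec => [?|?]; first by left; exact: exp_pos.
by case: Req_EM_T => ? /=; lra.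
Qed.

Lemma rpow_add t a b : 0 <= a -> 0 <= b -> rpow t (a + b) = rpow t a * rpow t b.
Proof.
move=> a_ge0 b_ge0; rewrite /rpow; case: Rlt_dec => [?|?]; first exact: Rpower_plus.
by do 3 case: Req_EM_T => ? /=; lra.
Qed.

Lemma rpow_1 t : 0 <= t -> rpow t 1 = t.
Proof.
case=> [t_pos|<-]; last by rewrite rpow_0; lra.
by rewrite rpow_pos // Rpower_1.
Qed.

Lemma rpow_2 t : 0 <= t -> rpow t 2 = t * t.
Proof.
move=> t_ge0; have -> : 2 = 1 + 1 by lra.
by rewrite rpow_add ?rpow_1 //; lra.
Qed.

Lemma rpow_le_exp_anti t a b : 0 <= t <= 1 -> 0 < b -> b <= a -> rpow t a <= rpow t b.
Proof.
move=> [[t_pos|<-] t_le1] b_pos ba; last by rewrite !rpow_0; lra.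
rewrite !rpow_pos // /Rpower.
have ln_le0 : ln t <= 0.
  rewrite -ln_1; case: t_le1 => [t_lt1|->]; [left; exact: ln_increasing | exact: Rle_refl].
have [lt|->] : a * ln t < b * ln t \/ a * ln t = b * ln t by nra.
  by left; apply: exp_increasing.
exact: Rle_refl.
Qed.

Lemma rpow_pow t m n : 0 <= t -> 0 < m -> (0 < n)%N -> rpow t m ^ n = rpow t (m * INR n).
Proof.
case=> [t_pos|<-] m_pos n_pos.
  by rewrite !rpow_pos // -Rpower_pow ?Rpower_mult //; exact: exp_pos.
have INR_pos : 0 < INR n by apply: lt_0_INR; apply/ltP.
by rewrite !rpow_0 ?pow_i //; [apply/ltP | nra].
Qed.

(** * Little-o at 0+ *)

Definition near0 (P : R -> Prop) : Prop :=
  exists d, 0 < d /\ forall t, 0 <= t -> t < d -> P t.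

Lemma near0_and P Q : near0 P -> near0 Q -> near0 (fun t => P t /\ Q t).
Proof.
move=> [d1 [d1_pos H1]] [d2 [d2_pos H2]]; exists (Rmin d1 d2); split; first exact: Rmin_pos.
move=> t t_ge0 t_lt; have := Rmin_l d1 d2; have := Rmin_r d1 d2.
by split; [apply: H1 | apply: H2] => //; lra.
Qed.

Lemma near0_mono (P Q : R -> Prop) :
  (forall t, 0 <= t -> P t -> Q t) -> near0 P -> near0 Q.
Proof. by move=> PQ [d [d_pos H]]; exists d; split => // t t_ge0 t_lt; apply: PQ (H _ _ _). Qed.

Lemma near0_all (P : R -> Prop) : (forall t, P t) -> near0 P.
Proof. by move=> H; exists 1; split => [|t _ _]; [lra | exact: H]. Qed.

Lemma near0_le1 : near0 (fun t => t <= 1).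
Proof. by exists 1; split => [|t _]; lra. Qed.

Lemma near0_forall_ord N (P : 'I_N -> R -> Prop) :
  (forall i, near0 (P i)) -> near0 (fun t => forall i, P i t).
Proof.
move=> H.
suff: forall n, near0 (fun t => forall i : 'I_N, (i < n)%N -> P i t).
  by move=> /(_ N); apply: near0_mono => t _ Hn i; exact: Hn.
elim=> [|n IHn]; first exact: near0_all.
have [n_lt|N_le] := ltnP n N; last first.
  by apply: near0_mono IHn => t _ Hn i _; apply: Hn; exact: leq_trans (ltn_ord i) N_le.
apply: near0_mono (near0_and IHn (H (Ordinal n_lt))) => t _ [Hn Hlast] i.
rewrite ltnS leq_eqVlt => /orP[/eqP i_n|]; last exact: Hn.
by have -> : i = Ordinal n_lt by exact: val_inj.
Qed.

Lemma little_o_near0_eq f g : near0 (fun t => f t = g t) -> little_o f -> little_o g.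
Proof.
move=> [d [d_pos Hfg]] Hf eps eps_pos.
have [d1 [d1_pos H1]] := Hf eps eps_pos.
exists (Rmin d d1); split; first exact: Rmin_pos.
move=> t t_ge0 t_lt; have := Rmin_l d d1; have := Rmin_r d d1 => ? ?.
by rewrite -Hfg; [apply: H1|..] => //; lra.
Qed.

Lemma little_o_ext f g : (forall t, f t = g t) -> little_o f -> little_o g.
Proof. by move=> fg; apply: little_o_near0_eq; exact: near0_all. Qed.

Lemma little_o0 : little_o (fun _ => 0).
Proof. by move=> eps eps_pos; exists 1; split => [|t t_ge0 _]; rewrite ?Rabs_R0; nra. Qed.

Lemma little_o_at0 f : little_o f -> f 0 = 0.
Proof.
move=> Hf; have [d [d_pos Hd]] := Hf 1 Rlt_0_1.
have := Hd 0 (Rle_refl 0) d_pos; rewrite Rmult_0_r => H.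
by case: (Req_dec (f 0) 0) => // /Rabs_pos_lt; lra.
Qed.

Lemma little_o_dom f g :
  little_o g -> near0 (fun t => Rabs (f t) <= Rabs (g t)) -> little_o f.
Proof.
move=> Hg [d [d_pos Hfg]] eps eps_pos.
have [d1 [d1_pos H1]] := Hg eps eps_pos.
exists (Rmin d d1); split; first exact: Rmin_pos.
move=> t t_ge0 t_lt; have := Rmin_l d d1; have := Rmin_r d d1 => ? ?.
by apply: Rle_trans (Hfg _ _ _) (H1 _ _ _) => //; lra.
Qed.

Lemma little_o_add f g : little_o f -> little_o g -> little_o (fun t => f t + g t).
Proof.
move=> Hf Hg eps eps_pos.
have [d1 [d1_pos H1]] := Hf (eps / 2) ltac:(lra).
have [d2 [d2_pos H2]] := Hg (eps / 2) ltac:(lra).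
exists (Rmin d1 d2); split; first exact: Rmin_pos.
move=> t t_ge0 t_lt; have := Rmin_l d1 d2; have := Rmin_r d1 d2 => ? ?.
have := H1 t t_ge0 ltac:(lra); have := H2 t t_ge0 ltac:(lra).
have := Rabs_triang (f t) (g t); lra.
Qed.

Lemma little_o_scal c f : little_o f -> little_o (fun t => c * f t).
Proof.
move=> Hf; apply: (little_o_dom (g := fun t => (Rabs c + 1) * f t)).
  move=> eps eps_pos; have c1_pos : 0 < Rabs c + 1 by have := Rabs_pos c; lra.
  have [d [d_pos Hd]] := Hf (eps / (Rabs c + 1)) (Rdiv_lt_0_compat _ _ eps_pos c1_pos).
  exists d; split => // t t_ge0 t_lt; rewrite Rabs_mult (Rabs_pos_eq (Rabs c + 1)); last lra.
  have := Rmult_le_compat_l _ _ _ (Rlt_le _ _ c1_pos) (Hd t t_ge0 t_lt).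
  by have -> : (Rabs c + 1) * (eps / (Rabs c + 1) * t) = eps * t by field; lra.
apply: near0_all => t; rewrite !Rabs_mult (Rabs_pos_eq (Rabs c + 1)); last by have := Rabs_pos c; lra.
by have := Rabs_pos (f t); nra.
Qed.

Lemma little_o_mul_bounded f g :
  little_o f -> (exists B, near0 (fun t => Rabs (g t) <= B)) -> little_o (fun t => f t * g t).
Proof.
move=> Hf [B HB].
apply: little_o_dom (little_o_scal (Rabs B) Hf) _.
apply: near0_mono HB => t _ gB; rewrite !Rabs_mult Rabs_Rabsolu.
by have := Rabs_pos (f t); have := Rle_abs B; nra.
Qed.

Lemma little_o_of_square_bound h :
  (exists C, near0 (fun t => Rabs (h t) <= C * (t * t))) -> little_o h.
Proof.
move=> [C [d [d_pos Hd]]] eps eps_pos.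
have C1_pos : 0 < Rabs C + 1 by have := Rabs_pos C; lra.
exists (Rmin d (eps / (Rabs C + 1))); split.
  by apply: Rmin_pos => //; apply: Rdiv_lt_0_compat.
move=> t t_ge0 t_lt; have := Rmin_l d (eps / (Rabs C + 1)).
have := Rmin_r d (eps / (Rabs C + 1)) => ? ?.
have teps : t * (Rabs C + 1) <= eps.
  have -> : eps = eps / (Rabs C + 1) * (Rabs C + 1) by field; lra.
  by apply: Rmult_le_compat_r; lra.
apply: Rle_trans (Hd t t_ge0 ltac:(lra)) _; have := Rle_abs C; nra.
Qed.

(** * The algebra R_o[t] *)

Inductive powsum : (R -> R) -> Prop :=
| powsum0 : powsum (fun _ => 0)
| powsum_cons g c a : 0 <= a -> powsum g -> powsum (fun t => g t + c * rpow t a).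

Lemma powsum_ext g h : (forall t, g t = h t) -> powsum g -> powsum h.
Proof. by move=> gh; rewrite (functional_extensionality h g) // => t; rewrite gh. Qed.

Lemma powsum_const c : powsum (fun _ => c).
Proof.
apply: (powsum_ext (g := fun t => 0 + c * rpow t 0)); first by move=> t; rewrite rpow_exp0; ring.
by apply: powsum_cons; [lra | exact: powsum0].
Qed.

Lemma powsum_add g h : powsum g -> powsum h -> powsum (fun t => g t + h t).
Proof.
move=> Hg; elim=> [|h' c a a_ge0 _ IH]; first by apply: powsum_ext Hg => t; ring.
apply: (powsum_ext (g := fun t => (g t + h' t) + c * rpow t a)); first by move=> t; ring.
exact: powsum_cons.
Qed.

Lemma powsum_mul_monomial g c a : 0 <= a -> powsum g -> powsum (fun t => g t * (c * rpow t a)).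
Proof.
move=> a_ge0; elim=> [|g' c' a' a'_ge0 _ IH]; first by apply: powsum_ext powsum0 => t; ring.
apply: (powsum_ext (g := fun t => g' t * (c * rpow t a) + (c' * c) * rpow t (a' + a))).
  by move=> t; rewrite rpow_add //; ring.
by apply: powsum_cons => //; lra.
Qed.

Lemma powsum_mul g h : powsum g -> powsum h -> powsum (fun t => g t * h t).
Proof.
move=> Hg; elim=> [|h' c a a_ge0 _ IH]; first by apply: powsum_ext powsum0 => t; ring.
apply: (powsum_ext (g := fun t => g t * h' t + g t * (c * rpow t a))); first by move=> t; ring.
by apply: powsum_add => //; exact: powsum_mul_monomial.
Qed.

Lemma powsum_psum k al a : (forall i, (i < k)%N -> 0 <= a i) -> powsum (psum k al a).
Proof.
elim: k => [|k IH] a_ge0 /=; first exact: powsum0.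
apply: powsum_cons; first exact: a_ge0.
by apply: IH => i /ltnW; exact: a_ge0.
Qed.

Lemma psum_ext k al al' a a' t : (forall i, (i < k)%N -> al i = al' i /\ a i = a' i) ->
  psum k al a t = psum k al' a' t.
Proof.
elim: k => [|k IH] eq_k //=.
have [-> ->] := eq_k k (ltnSn k).
by rewrite IH // => i /ltnW; exact: eq_k.
Qed.

Lemma psum_of_powsum p : powsum p -> exists k al a,
  (forall i, (i < k)%N -> 0 <= a i) /\ forall t, p t = psum k al a t.
Proof.
elim=> [|g c a0 a0_ge0 _ [k [al [a [a_ge0 Hg]]]]].
  by exists 0%N, (fun _ => 0), (fun _ => 0).
exists k.+1, (fun i => if i == k then c else al i), (fun i => if i == k then a0 else a i).
split=> [i|t /=].
  by rewrite ltnS leq_eqVlt => /orP[/eqP ->|i_lt]; rewrite ?eqxx // ltn_eqF //; exact: a_ge0.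
rewrite eqxx Hg; congr (_ + _); apply: psum_ext => i i_lt.
by rewrite ltn_eqF.
Qed.

Lemma Ro_powsum x : Ro x <-> exists g, powsum g /\ little_o (fun t => x t - g t).
Proof.
split=> [[k [r [al [a [a_ge0 Hx]]]]] | [g [Hg Hx]]].
  exists (fun t => r + psum k al a t); split => //.
  by apply: powsum_add; [exact: powsum_const | exact: powsum_psum].
have [k [al [a [a_ge0 Hgk]]]] := psum_of_powsum Hg.
exists k, 0, al, a; split => //.
by apply: little_o_ext Hx => t; rewrite Hgk; ring.
Qed.

Lemma powsum_holder p : powsum p -> exists m C, 0 < m <= 1 /\ 0 <= C /\
  forall t, 0 <= t <= 1 -> Rabs (p t - p 0) <= C * rpow t m.
Proof.
elim=> [|g c a a_ge0 _ [m [C [m_range [C_ge0 Hg]]]]].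
  by exists 1, 0; do 2 split => //; try lra; move=> t _; rewrite Rminus_0_r Rabs_R0; lra.
have [a_pos|<-] := a_ge0; last first.
  exists m, C; split => //; split => // t t_range; rewrite !rpow_exp0.
  have -> : g t + c * 1 - (g 0 + c * 1) = g t - g 0 by ring.
  exact: Hg.
exists (Rmin m a), (C + Rabs c).
have mina_pos : 0 < Rmin m a by apply: Rmin_pos; lra.
split; first by have := Rmin_l m a; lra.
split=> [|t t_range]; first by have := Rabs_pos c; lra.
rewrite rpow_0 //.
have -> : g t + c * rpow t a - (g 0 + c * 0) = (g t - g 0) + c * rpow t a by ring.
apply: Rle_trans (Rabs_triang _ _) _.
rewrite Rabs_mult (Rabs_pos_eq (rpow t a)); last exact: rpow_ge0.
have := rpow_le_exp_anti t_range mina_pos (Rmin_l m a).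
have := rpow_le_exp_anti t_range mina_pos (Rmin_r m a).
have := Hg t t_range; have := Rabs_pos c; have := rpow_ge0 t a; nra.
Qed.

Lemma Ro_holder x : Ro x -> exists m C, 0 < m <= 1 /\ 0 <= C /\
  near0 (fun t => Rabs (x t - x 0) <= C * rpow t m).
Proof.
move=> /Ro_powsum [g [Hg Hxg]].
have [m [C [m_range [C_ge0 Hhold]]]] := powsum_holder Hg.
have x0 : x 0 = g 0 by have := little_o_at0 Hxg; lra.
have [d [d_pos Hd]] := Hxg 1 Rlt_0_1.
exists m, (C + 1); do 2 split => //; first lra.
apply: near0_mono (near0_and (ex_intro _ d (conj d_pos Hd)) near0_le1) => t t_ge0 [Hxt t_le1].
have t_le_rpow : t <= rpow t m.
  by rewrite -{1}(rpow_1 t_ge0); apply: rpow_le_exp_anti; lra.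
have := Hhold t (conj t_ge0 t_le1).
have -> : x t - x 0 = (g t - g 0) + (x t - g t) by rewrite x0; ring.
have := Rabs_triang (g t - g 0) (x t - g t); lra.
Qed.

(* [x t - x 0] represents the infinitesimal part of the Fermat real [x]; it is nilpotent. *)
Lemma Ro_nilpotent x : Ro x ->
  exists K : nat, forall n, (K <= n)%N -> little_o (fun t => (x t - x 0) ^ n).
Proof.
move=> /Ro_holder [m [C [[m_pos _] [C_ge0 Hhold]]]].
have [K K_gt] := INR_archimed m 2 m_pos.
exists K.+1 => n Kn; apply: little_o_of_square_bound; exists (C ^ n).
apply: near0_mono (near0_and Hhold near0_le1) => t t_ge0 [Hxt t_le1].
have n_pos : (0 < n)%N by exact: leq_trans Kn.
have mn_ge2 : 2 <= m * INR n.
  have : INR K <= INR n by apply: le_INR; apply/leP; exact: ltnW.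
  by nra.
rewrite -RPow_abs; apply: Rle_trans (pow_incr _ _ n (conj (Rabs_pos _) Hxt)) _.
rewrite Rpow_mult_distr rpow_pow // -rpow_2 //.
apply: Rmult_le_compat_l; first exact: pow_le.
by apply: rpow_le_exp_anti => //; lra.
Qed.

Lemma Ro_cont x : Ro x -> forall eps, 0 < eps -> near0 (fun t => Rabs (x t - x 0) < eps).
Proof.
move=> /Ro_nilpotent [K HK] eps eps_pos.
have epsK_pos : 0 < eps ^ K by exact: pow_lt.
have [d [d_pos Hd]] := HK K (leqnn K) (eps ^ K / 2) ltac:(lra).
apply: near0_mono (near0_and (ex_intro _ d (conj d_pos Hd)) near0_le1) => t t_ge0 [Hxt t_le1].
apply: Rnot_le_lt => eps_le.
have := pow_incr _ _ K (conj (Rlt_le _ _ eps_pos) eps_le).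
by rewrite RPow_abs; nra.
Qed.

Lemma Ro_bounded x : Ro x -> exists B, near0 (fun t => Rabs (x t) <= B).
Proof.
move=> Hx; exists (Rabs (x 0) + 1).
apply: near0_mono (Ro_cont Hx Rlt_0_1) => t _ Hxt.
have := Rabs_triang (x 0) (x t - x 0); rewrite Rplus_minus; lra.
Qed.

Lemma Ro_of_powsum g : powsum g -> Ro g.
Proof. by move=> Hg; apply/Ro_powsum; exists g; split => //; apply: little_o_ext little_o0 => t; ring. Qed.

Lemma Ro_const c : Ro (fun _ => c).
Proof. exact: Ro_of_powsum (powsum_const c). Qed.

Lemma Ro_req x y : Ro x -> req y x -> Ro y.
Proof.
move=> /Ro_powsum [g [Hg Hxg]] Hyx; apply/Ro_powsum; exists g; split => //.
by apply: little_o_ext (little_o_add Hyx Hxg) => t; ring.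
Qed.

Lemma Ro_near0_eq x y : Ro x -> near0 (fun t => x t = y t) -> Ro y.
Proof.
move=> Hx xy; apply: Ro_req Hx _; apply: little_o_near0_eq little_o0.
by apply: near0_mono xy => t _ ->; ring.
Qed.

Lemma Ro_add x y : Ro x -> Ro y -> Ro (fun t => x t + y t).
Proof.
move=> /Ro_powsum [g [Hg Hxg]] /Ro_powsum [h [Hh Hyh]]; apply/Ro_powsum.
exists (fun t => g t + h t); split; first exact: powsum_add.
by apply: little_o_ext (little_o_add Hxg Hyh) => t; ring.
Qed.

Lemma Ro_mul x y : Ro x -> Ro y -> Ro (fun t => x t * y t).
Proof.
move=> Hx Hy; have y_bd := Ro_bounded Hy.
move: Hx Hy => /Ro_powsum [g [Hg Hxg]] /Ro_powsum [h [Hh Hyh]]; apply/Ro_powsum.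
exists (fun t => g t * h t); split; first exact: powsum_mul.
have := little_o_add (little_o_mul_bounded Hxg y_bd)
                     (little_o_mul_bounded Hyh (Ro_bounded (Ro_of_powsum Hg))).
by apply: little_o_ext => t; ring.
Qed.

Lemma Ro_pow x n : Ro x -> Ro (fun t => x t ^ n).
Proof. by move=> Hx; elim: n => [|n IH] /=; [exact: Ro_const | exact: Ro_mul]. Qed.

Lemma req_refl x : req x x.
Proof. by apply: little_o_ext little_o0 => t; ring. Qed.

Lemma req_sym x y : req x y -> req y x.
Proof. by move=> Hxy; apply: little_o_ext (little_o_scal (-1) Hxy) => t; ring. Qed.

Lemma req_at0 x y : req x y -> x 0 = y 0.
Proof. by move/little_o_at0; lra. Qed.

Lemma req_add x x' y y' : req x x' -> req y y' -> req (fun t => x t + y t) (fun t => x' t + y' t).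
Proof. by move=> Hx Hy; apply: little_o_ext (little_o_add Hx Hy) => t; ring. Qed.

Lemma req_mul x x' y y' : req x x' -> req y y' -> Ro x' -> Ro y ->
  req (fun t => x t * y t) (fun t => x' t * y' t).
Proof.
move=> Hx Hy Hx' Hy'.
have := little_o_add (little_o_mul_bounded Hx (Ro_bounded Hy'))
                     (little_o_mul_bounded Hy (Ro_bounded Hx')).
by apply: little_o_ext => t; ring.
Qed.

Lemma req_pow x x' n : req x x' -> Ro x' -> req (fun t => x t ^ n) (fun t => x' t ^ n).
Proof.
move=> Hx Hx'; have Hxr := Ro_req Hx' Hx.
by elim: n => [|n IH] /=; [exact: req_refl | apply: req_mul => //; exact: Ro_pow].
Qed.

(** * Taylor expansion *)

Fixpoint taylor_poly (c : nat -> R) (K : nat) (y : R) : R :=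
  match K with
  | O => 0
  | S K' => taylor_poly c K' y + c K' * (y ^ K' / INR (Factorial.fact K'))
  end.

Lemma taylor_poly_at0 c K : taylor_poly c K.+1 0 = c 0%nat.
Proof.
elim: K => [|K IH] /=; first by field.
by move: IH => /= ->; rewrite /Rdiv !Rmult_0_l; ring.
Qed.

Lemma taylor_poly_derive c K y :
  derivable_pt_lim (taylor_poly c K.+1) y (taylor_poly (fun k => c k.+1) K y).
Proof.
elim: K y => [|K IH] y.
  apply: (derivable_pt_lim_ext _ _ _ _ _ (derivable_pt_lim_const (c 0%nat) y)) => z.
  by rewrite /fct_cte /=; field.
have Hsum := derivable_pt_lim_plus _ _ y _ _ (IH y)
  (derivable_pt_lim_scal _ (c K.+1 / INR (Factorial.fact K.+1)) y _ (derivable_pt_lim_pow y K.+1)).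
have fact_ne0 := INR_fact_neq_0 K; have SK_ne0 : INR K.+1 <> 0 by apply: not_0_INR.
have fact_S : INR (Factorial.fact K.+1) = INR K.+1 * INR (Factorial.fact K) by rewrite -mult_INR.
have -> : taylor_poly (fun k => c k.+1) K.+1 y = taylor_poly (fun k => c k.+1) K y +
    c K.+1 / INR (Factorial.fact K.+1) * (INR K.+1 * y ^ K.+1.-1).
  rewrite fact_S; change (K.+1.-1) with K; simpl taylor_poly; field; by split.
apply: (derivable_pt_lim_ext _ _ _ _ _ Hsum) => z.
rewrite /plus_fct /mult_real_fct.
change (taylor_poly c K.+2 z) with
  (taylor_poly c K.+1 z + c K.+1 * (z ^ K.+1 / INR (Factorial.fact K.+1))).
by rewrite /Rdiv; ring.
Qed.

Lemma derivable_pt_lim_shift F x0 s l :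
  derivable_pt_lim F (s - x0) l -> derivable_pt_lim (fun z => F (z - x0)) s l.
Proof.
move=> HF.
have Hsub : derivable_pt_lim (fun z => z - x0) s 1.
  have := derivable_pt_lim_minus _ _ s _ _ (derivable_pt_lim_id s) (derivable_pt_lim_const x0 s).
  by rewrite Rminus_0_r.
by rewrite -(Rmult_1_r l); exact: derivable_pt_lim_comp Hsub HF.
Qed.

Lemma ball_mvt F F' x0 rho x :
  (forall s, Rabs (s - x0) < rho -> derivable_pt_lim F s (F' s)) -> Rabs (x - x0) < rho ->
  exists c, Rabs (c - x0) <= Rabs (x - x0) /\ F x - F x0 = F' c * (x - x0).
Proof.
move=> HF x_in.
have in_ball c : Rmin x x0 <= c <= Rmax x x0 -> Rabs (c - x0) <= Rabs (x - x0).
  rewrite /Rmin /Rmax /Rabs; case: Rle_dec => ? ?; do 2 case: Rcase_abs => ?; lra.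
have mvt a b : a < b -> Rmin x x0 <= a -> b <= Rmax x x0 ->
    exists c, F b - F a = F' c * (b - a) /\ a < c < b.
  move=> ab xa bx; apply: MVT_cor2 => // c c_ab.
  by apply: HF; apply: Rle_lt_trans (in_ball c _) x_in; lra.
have := Rmin_l x x0; have := Rmin_r x x0; have := Rmax_l x x0; have := Rmax_r x x0 => ? ? ? ?.
case: (Rtotal_order x x0) => [x_lt|[->|x_gt]].
- have [c [Hc c_in]] := mvt x x0 x_lt ltac:(lra) ltac:(lra).
  by exists c; split; [apply: in_ball; lra | rewrite -Ropp_minus_distr Hc; ring].
- by exists x0; split; [exact: Rle_refl | ring].
- have [c [Hc c_in]] := mvt x0 x x_gt ltac:(lra) ltac:(lra).
  by exists c; split; [apply: in_ball; lra | exact: Hc].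
Qed.

Lemma taylor_remainder K (G : nat -> R -> R) x0 rho M :
  (forall k s, Rabs (s - x0) < rho -> derivable_pt_lim (G k) s (G k.+1 s)) ->
  (forall s, Rabs (s - x0) < rho -> Rabs (G K s) <= M) ->
  forall x, Rabs (x - x0) < rho ->
    Rabs (G 0%nat x - taylor_poly (fun k => G k x0) K (x - x0)) <= M * Rabs (x - x0) ^ K.
Proof.
elim: K G => [|K IH] G HG HM x x_in; first by rewrite /= Rminus_0_r Rmult_1_r; exact: HM.
pose Rem s := G 0%nat s - taylor_poly (fun k => G k x0) K.+1 (s - x0).
pose Rem' s := G 1%nat s - taylor_poly (fun k => G k.+1 x0) K (s - x0).
have HRem s : Rabs (s - x0) < rho -> derivable_pt_lim Rem s (Rem' s).
  move=> s_in; apply: derivable_pt_lim_minus; first exact: HG.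
  exact: derivable_pt_lim_shift (taylor_poly_derive _ _ _).
have [c [c_in HRc]] := ball_mvt HRem x_in.
have Rem_x0 : Rem x0 = 0 by rewrite /Rem Rminus_diag taylor_poly_at0; ring.
have HRem' := IH (fun k => G k.+1) (fun k => HG k.+1) HM c (Rle_lt_trans _ _ _ c_in x_in).
have M_ge0 : 0 <= M.
  by apply: Rle_trans (HM x x_in); exact: Rabs_pos.
rewrite -/(Rem x) -(Rminus_0_r (Rem x)) -Rem_x0 HRc Rabs_mult /=.
apply: Rle_trans (Rmult_le_compat_r _ _ _ (Rabs_pos _) HRem') _.
have := Rmult_le_compat_r _ _ _ (Rabs_pos (x - x0))
  (Rmult_le_compat_l M _ _ M_ge0 (pow_incr _ _ K (conj (Rabs_pos _) c_in))).
by rewrite Rmult_comm (Rmult_comm M); lra.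
Qed.

Lemma Ro_taylor_poly (c : nat -> R -> R) v K : (forall k, Ro (c k)) -> Ro v ->
  Ro (fun t => taylor_poly (fun k => c k t) K (v t)).
Proof.
move=> Hc Hv; elim: K => [|K IH] /=; first exact: Ro_const.
apply: Ro_add => //; apply: Ro_mul => //.
by apply: Ro_mul; [exact: Ro_pow | exact: Ro_const].
Qed.

Lemma req_taylor_poly (c c' : nat -> R -> R) v v' K :
  (forall k, req (c k) (c' k)) -> (forall k, Ro (c' k)) -> req v v' -> Ro v -> Ro v' ->
  req (fun t => taylor_poly (fun k => c k t) K (v t)) (fun t => taylor_poly (fun k => c' k t) K (v' t)).
Proof.
move=> Hcc Hc' Hvv Hv Hv'; elim: K => [|K IH] /=; first exact: req_refl.
apply: req_add => //; apply: req_mul => //.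
- apply: (req_mul (y := fun _ => / INR (Factorial.fact K))); [exact: req_pow | exact: req_refl | exact: Ro_pow |].
  exact: Ro_const.
- by apply: Ro_mul; [exact: Ro_pow | exact: Ro_const].
Qed.

(** * Composition with smooth maps *)

Lemma upd_same N (z : vec N) i s : upd z i s i = s.
Proof. by rewrite /upd eqxx. Qed.

Lemma upd_upd N (z : vec N) i s s' : upd (upd z i s) i s' = upd z i s'.
Proof. by apply: functional_extensionality => j; rewrite /upd; case: (j == i). Qed.

Lemma upd_id N (z : vec N) i : upd z i (z i) = z.
Proof. by apply: functional_extensionality => j; rewrite /upd; case: eqP => [->|]. Qed.

Lemma near0_dist_lt N (w : 'I_N -> R -> R) (z0 : vec N) e : 0 < e ->
  (forall i, Ro (w i)) -> (forall i, w i 0 = z0 i) ->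
  near0 (fun t => forall i, Rabs (w i t - z0 i) < e).
Proof.
move=> e_pos Hw Hw0; apply: near0_forall_ord => i.
by rewrite -Hw0; exact: Ro_cont.
Qed.

Lemma near0_in_open N (U : vec N -> Prop) (w : 'I_N -> R -> R) (z0 : vec N) :
  open_vec U -> U z0 -> (forall i, Ro (w i)) -> (forall i, w i 0 = z0 i) ->
  near0 (fun t => U (fun i => w i t)).
Proof.
move=> U_open U_z0 Hw Hw0; have [e [e_pos He]] := U_open z0 U_z0.
by apply: near0_mono (near0_dist_lt e_pos Hw Hw0) => t _; exact: He.
Qed.

Section SmoothComposition.

Variables (N : nat) (U : vec N -> Prop) (D : list 'I_N -> vec N -> R) (z0 : vec N).
Hypotheses (U_open : open_vec U) (U_z0 : U z0)
  (D_partial : forall l i z, U z -> has_partial (D l) i z (D (i :: l) z))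
  (D_cont : forall l, continuous_on_vec U (D l)).

Lemma taylor_along_coord l (j : 'I_N) K : exists rho M, 0 < rho /\
  forall (v : vec N) s, (forall i, Rabs (v i - z0 i) < rho) -> v j = z0 j -> Rabs (s - z0 j) < rho ->
    Rabs (D l (upd v j s) - taylor_poly (fun k => D (iter k (cons j) l) v) K (s - z0 j))
      <= M * Rabs (s - z0 j) ^ K.
Proof.
have [e [e_pos He]] := U_open U_z0.
have [d [d_pos Hd]] := D_cont (iter K (cons j) l) U_z0 Rlt_0_1.
exists (Rmin e d), (Rabs (D (iter K (cons j) l) z0) + 1); split; first exact: Rmin_pos.
move=> v s v_near vj s_near.
have upd_near s' i : Rabs (s' - z0 j) < Rmin e d -> Rabs (upd v j s' i - z0 i) < Rmin e d.
  by rewrite /upd; case: eqP => [->|].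
have upd_U s' : Rabs (s' - z0 j) < Rmin e d -> U (upd v j s').
  by move=> s'_near; apply: He => i; apply: Rlt_le_trans (upd_near _ _ s'_near) (Rmin_l e d).
pose G k s' := D (iter k (cons j) l) (upd v j s').
have -> : (fun k => D (iter k (cons j) l) v) = (fun k => G k (z0 j)).
  by apply: functional_extensionality => k; rewrite /G -vj upd_id.
apply: (taylor_remainder (G := G)) s_near => [k s' s'_near | s' s'_near].
  have := D_partial (iter k (cons j) l) j (upd_U s' s'_near).
  rewrite /has_partial upd_same; apply: derivable_pt_lim_ext => y.
  by rewrite /G upd_upd.
have := Hd _ (upd_U s' s'_near) (fun i => Rlt_le_trans _ _ _ (upd_near s' i s'_near) (Rmin_r e d)).
have := Rabs_triang_inv (G K s') (D (iter K (cons j) l) z0); rewrite /G; lra.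
Qed.

Variables (u u' : 'I_N -> R -> R).
Hypotheses (Hu : forall i, Ro (u i)) (Hu' : forall i, Ro (u' i))
  (u_z0 : forall i, u i 0 = z0 i) (u_u' : forall i, req (u i) (u' i)).

Lemma u'_z0 i : u' i 0 = z0 i.
Proof. by rewrite -(req_at0 (u_u' i)). Qed.

Definition prefix_point (w : 'I_N -> R -> R) (n : nat) (t : R) : vec N :=
  fun i => if (i < n)%N then w i t else z0 i.

Lemma prefix_point_succ w (j : 'I_N) t :
  prefix_point w j.+1 t = upd (prefix_point w j t) j (w j t).
Proof.
apply: functional_extensionality => i; rewrite /prefix_point /upd ltnS leq_eqVlt.
case: (eqVneq i j) => [->|ne]; first by case: eqP.
by case: eqP => // /val_inj ij; rewrite ij eqxx in ne.
Qed.

Lemma prefix_point_coord w (j : 'I_N) t : prefix_point w j t j = z0 j.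
Proof. by rewrite /prefix_point ltnn. Qed.

Lemma prefix_point_full w t : prefix_point w N t = fun i => w i t.
Proof. by apply: functional_extensionality => i; rewrite /prefix_point ltn_ord. Qed.

Lemma prefix_point_remainder w (j : 'I_N) l K :
  (forall i, Ro (w i)) -> (forall i, w i 0 = z0 i) -> little_o (fun t => (w j t - z0 j) ^ K) ->
  little_o (fun t => D l (prefix_point w j.+1 t)
    - taylor_poly (fun k => D (iter k (cons j) l) (prefix_point w j t)) K (w j t - z0 j)).
Proof.
move=> Hw w_z0 w_nil.
have [rho [M [rho_pos Htay]]] := taylor_along_coord l j K.
apply: little_o_dom (little_o_scal M w_nil) _.
apply: near0_mono (near0_dist_lt rho_pos Hw w_z0) => t _ w_near.
rewrite prefix_point_succ Rabs_mult -RPow_abs.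
apply: Rle_trans (Htay _ _ _ (prefix_point_coord w j t) (w_near j)) _.
  by move=> i; rewrite /prefix_point; case: ifP => _; rewrite ?Rminus_diag ?Rabs_R0.
by apply: Rmult_le_compat_r; [apply: pow_le; exact: Rabs_pos | exact: Rle_abs].
Qed.

Definition prefix_comp_ok (n : nat) : Prop := forall l,
  Ro (fun t => D l (prefix_point u n t)) /\
  req (fun t => D l (prefix_point u n t)) (fun t => D l (prefix_point u' n t)).

Lemma prefix_comp_ok_succ (j : 'I_N) : prefix_comp_ok j -> prefix_comp_ok j.+1.
Proof.
move=> IH l.
have [K0 HK0] := Ro_nilpotent (Hu j); have [K1 HK1] := Ro_nilpotent (Hu' j).
rewrite u_z0 in HK0; rewrite u'_z0 in HK1.
pose K := maxn K0 K1.
have Rem := prefix_point_remainder l Hu u_z0 (HK0 K (leq_maxl K0 K1)).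
have Rem' := prefix_point_remainder l Hu' u'_z0 (HK1 K (leq_maxr K0 K1)).
have dev_Ro w : Ro (w j) -> Ro (fun t => w j t - z0 j).
  by move=> Hwj; apply: Ro_add Hwj (Ro_const (- z0 j)).
have T_Ro := Ro_taylor_poly K (fun k => proj1 (IH (iter k (cons j) l))) (dev_Ro u (Hu j)).
have T_req : req
    (fun t => taylor_poly (fun k => D (iter k (cons j) l) (prefix_point u j t)) K (u j t - z0 j))
    (fun t => taylor_poly (fun k => D (iter k (cons j) l) (prefix_point u' j t)) K (u' j t - z0 j)).
  apply: req_taylor_poly (dev_Ro u (Hu j)) (dev_Ro u' (Hu' j)) => [k|k|].
  - exact: (proj2 (IH _)).
  - by have [Hk Hkk] := IH (iter k (cons j) l); exact: Ro_req Hk (req_sym Hkk).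
  - by apply: little_o_ext (u_u' j) => t; ring.
split; first exact: Ro_req T_Ro Rem.
have := little_o_add (little_o_add Rem T_req) (little_o_scal (-1) Rem').
by apply: little_o_ext => t; ring.
Qed.

Lemma prefix_comp_ok0 : prefix_comp_ok 0.
Proof.
have prefix0 w t : prefix_point w 0 t = z0 by apply: functional_extensionality.
move=> l; split; last by apply: little_o_ext little_o0 => t; rewrite !prefix0; ring.
by apply: Ro_near0_eq (Ro_const (D l z0)) _; apply: near0_all => t; rewrite prefix0.
Qed.

Lemma derivatives_comp_Ro l : Ro (fun t => D l (fun i => u i t)) /\
  req (fun t => D l (fun i => u i t)) (fun t => D l (fun i => u' i t)).
Proof.
have prefix_ok n : (n <= N)%N -> prefix_comp_ok n.
  elim: n => [_|n IH n_lt]; first exact: prefix_comp_ok0.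
  exact: (prefix_comp_ok_succ (j := Ordinal n_lt)) (IH (ltnW n_lt)).
have := prefix_ok N (leqnn N) l.
by rewrite (functional_extensionality _ _ (prefix_point_full u))
           (functional_extensionality _ _ (prefix_point_full u')).
Qed.

End SmoothComposition.

Lemma smooth_vec_comp N (U : vec N -> Prop) (g : vec N -> R) (z0 : vec N) (u u' : 'I_N -> R -> R) :
  open_vec U -> smooth_vec U g -> U z0 ->
  (forall i, Ro (u i)) -> (forall i, Ro (u' i)) -> (forall i, u i 0 = z0 i) -> (forall i, req (u i) (u' i)) ->
  Ro (fun t => g (fun i => u i t)) /\ req (fun t => g (fun i => u i t)) (fun t => g (fun i => u' i t)).
Proof.
move=> U_open [D [D_g [D_partial D_cont]]] U_z0 Hu Hu' u_z0 u_u'.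
have [Ro_Du req_Du] := derivatives_comp_Ro U_open U_z0 D_partial D_cont Hu Hu' u_z0 u_u' nil.
have D_g_near w : (forall i, Ro (w i)) -> (forall i, w i 0 = z0 i) ->
    near0 (fun t => D nil (fun i => w i t) = g (fun i => w i t)).
  by move=> Hw w_z0; apply: near0_mono (near0_in_open U_open U_z0 Hw w_z0) => t _; exact: D_g.
split; first exact: Ro_near0_eq Ro_Du (D_g_near u Hu u_z0).
apply: little_o_near0_eq req_Du.
apply: near0_mono (near0_and (D_g_near u Hu u_z0) (D_g_near u' Hu' (u'_z0 u_z0 u_u'))).
by move=> t _ [-> ->].
Qed.

(** * Fermat reals *)

Lemma repr_spec (X : FR) : proj1_sig X = (fun y => Ro y /\ req y (repr X)).
Proof. by rewrite /repr; case: constructive_indefinite_description => x []. Qed.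

Lemma rep_repr X : rep X (repr X).
Proof. by split; [exact: repr_Ro | rewrite repr_spec; split; [exact: repr_Ro | exact: req_refl]]. Qed.

Lemma rep_req X x : rep X x -> req x (repr X).
Proof. by case=> _; rewrite repr_spec => -[]. Qed.

Lemma rep_std X x : rep X x -> x 0 = std X.
Proof. by move/rep_req/req_at0. Qed.

Lemma mkFR_rep x (Hx : Ro x) y : Ro y -> req y x -> rep (mkFR Hx) y.
Proof. by move=> Hy Hyx; split. Qed.

Lemma std_mkFR x (Hx : Ro x) : std (mkFR Hx) = x 0.
Proof. by rewrite -(rep_std (mkFR_rep Hx Hx (req_refl x))). Qed.

Lemma std_FRsub_real X d : std (FRsub_real X d) = std X - d.
Proof. exact: std_mkFR. Qed.

Lemma FRle_std X Y : FRle X Y -> std X <= std Y.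
Proof.
move=> [x [y [z [Hx [Hy [_ [z0 [d [d_pos Hd]]]]]]]]].
by have := Hd 0 (Rle_refl 0) d_pos; rewrite (rep_std Hx) (rep_std Hy) (req_at0 z0); lra.
Qed.

Lemma FRle_near0 X Y x y : rep X x -> rep Y y -> near0 (fun t => x t <= y t) -> FRle X Y.
Proof.
move=> Hx Hy xy; exists x, y, (fun _ => 0); do 3 split => //; first exact: Ro_const.
split; first exact: req_refl.
by apply: near0_mono xy => t _; lra.
Qed.

Lemma FRlt_std X Y : std X < std Y -> FRlt X Y.
Proof.
move=> XY; split; last by move=> E; rewrite E in XY; lra.
apply: FRle_near0 (rep_repr X) (rep_repr Y) _.
have eps_pos : 0 < (std Y - std X) / 2 by lra.
apply: near0_mono (near0_and (Ro_cont (repr_Ro X) eps_pos) (Ro_cont (repr_Ro Y) eps_pos)).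
by rewrite /std in XY * => t _ []; rewrite /Rabs; do 2 case: Rcase_abs => ?; lra.
Qed.

Lemma not_little_o_sqrt : ~ little_o (fun t => rpow t (/2)).
Proof.
move=> Hsqrt; have [d [d_pos Hd]] := Hsqrt 1 Rlt_0_1.
pose t := Rmin (d / 2) (1 / 4).
have t_pos : 0 < t by apply: Rmin_pos; lra.
have := Rmin_l (d / 2) (1 / 4); have := Rmin_r (d / 2) (1 / 4); rewrite -/t => ? ?.
have := Hd t (Rlt_le _ _ t_pos) ltac:(lra).
rewrite rpow_pos // Rpower_sqrt // Rabs_right; last by apply: Rle_ge; exact: sqrt_pos.
by have := sqrt_sqrt t (Rlt_le _ _ t_pos); have := sqrt_lt_R0 t t_pos; nra.
Qed.

Lemma Ro_sqrt_shift A c : Ro (fun t => repr A t + c * rpow t (/2)).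
Proof.
apply: Ro_add (repr_Ro A) (Ro_of_powsum _).
apply: (powsum_ext (g := fun t => 0 + c * rpow t (/2))); first by move=> t; ring.
by apply: powsum_cons; [lra | exact: powsum0].
Qed.

(* [A + c dt^(1/2)]: infinitely close to [A], yet different from it when [c <> 0]. *)
Definition FRsqrt_shift (A : FR) (c : R) : FR := mkFR (Ro_sqrt_shift A c).

Lemma rep_FRsqrt_shift A c : rep (FRsqrt_shift A c) (fun t => repr A t + c * rpow t (/2)).
Proof. exact: mkFR_rep (Ro_sqrt_shift A c) (req_refl _). Qed.

Lemma std_FRsqrt_shift A c : std (FRsqrt_shift A c) = std A.
Proof. by rewrite std_mkFR rpow_0; [rewrite /std; ring | lra]. Qed.

Lemma FRsqrt_shift_neq A c : c <> 0 -> FRsqrt_shift A c <> A.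
Proof.
move=> c_ne0 E; apply: not_little_o_sqrt.
have := little_o_scal (/ c) (rep_req (rep_FRsqrt_shift A c)); rewrite E.
by apply: little_o_ext => t; field.
Qed.

Lemma FRsqrt_shift_ge A c : 0 <= c -> FRle A (FRsqrt_shift A c).
Proof.
move=> c_ge0; apply: FRle_near0 (rep_repr A) (rep_FRsqrt_shift A c) _.
by apply: near0_all => t; have := rpow_ge0 t (/2); nra.
Qed.

Lemma FRsqrt_shift_le A c : c <= 0 -> FRle (FRsqrt_shift A c) A.
Proof.
move=> c_le0; apply: FRle_near0 (rep_FRsqrt_shift A c) (rep_repr A) _.
by apply: near0_all => t; have := rpow_ge0 t (/2); nra.
Qed.

Definition joinv p (q : 'I_p -> R) (y : R) : vec p.+1 :=
  fun j => if unlift ord_max j is Some i then q i else y.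

Lemma joinv_widen p (q : 'I_p -> R) y i : joinv q y (widen_ord (leqnSn p) i) = q i.
Proof.
have -> : widen_ord (leqnSn p) i = lift ord_max i by apply: ord_inj; rewrite lift_max.
by rewrite /joinv liftK.
Qed.

Lemma joinv_max p (q : 'I_p -> R) y : joinv q y ord_max = y.
Proof. by rewrite /joinv unlift_none. Qed.

Lemma joinv_comp p (al : vec p -> R -> R) (q : 'I_p -> R) y :
  al (fun i => joinv q y (widen_ord (leqnSn p) i)) (joinv q y ord_max) = al q y.
Proof. by rewrite joinv_max; congr al; apply: functional_extensionality => i; rewrite joinv_widen. Qed.

Lemma open_vec_prod p (P : vec p -> Prop) V : open_vec P -> open_R V ->
  open_vec (fun z : vec p.+1 => P (fun i => z (widen_ord (leqnSn p) i)) /\ V (z ord_max)).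
Proof.
move=> P_open V_open z [Pz Vz].
have [e1 [e1_pos He1]] := P_open _ Pz; have [e2 [e2_pos He2]] := V_open _ Vz.
exists (Rmin e1 e2); split; first exact: Rmin_pos.
move=> w w_near; split; [apply: He1 => i | apply: He2].
  exact: Rlt_le_trans (w_near _) (Rmin_l _ _).
exact: Rlt_le_trans (w_near _) (Rmin_r _ _).
Qed.

Lemma comp_rep p (P : vec p -> Prop) V al (q : 'I_p -> FR) y qs ys :
  open_R V -> open_vec P -> P (fun i => std (q i)) -> V (std y) -> smooth_prod P V al ->
  (forall i, rep (q i) (qs i)) -> rep y ys ->
  Ro (fun t => al (fun i => qs i t) (ys t)) /\
  req (fun t => al (fun i => qs i t) (ys t)) (fun t => al (fun i => repr (q i) t) (repr y t)).
Proof.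
move=> V_open P_open Pq Vy al_smooth Hq Hy.
pose z0 := joinv (fun i => std (q i)) (std y).
pose u j t := joinv (fun i => qs i t) (ys t) j.
pose u' j t := joinv (fun i => repr (q i) t) (repr y t) j.
have z0_in : P (fun i => z0 (widen_ord (leqnSn p) i)) /\ V (z0 ord_max).
  rewrite /z0 joinv_max; split => //.
  by rewrite (functional_extensionality _ _ (joinv_widen (fun i => std (q i)) (std y))).
have [Hu Hu'] : (forall j, Ro (u j)) /\ (forall j, Ro (u' j)).
  split=> j; rewrite /u /u' /joinv; case: (unlift ord_max j) => [i|]; try exact: repr_Ro.
  - exact: (proj1 (Hq i)).
  - exact: (proj1 Hy).
have u_z0 j : u j 0 = z0 j by rewrite /u /z0 /joinv; case: (unlift ord_max j) => [i|]; exact: rep_std.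
have u_u' j : req (u j) (u' j) by rewrite /u /u' /joinv; case: (unlift ord_max j) => [i|]; exact: rep_req.
have := smooth_vec_comp (open_vec_prod P_open V_open) al_smooth z0_in Hu Hu' u_z0 u_u'.
have comp_eq (ws : 'I_p -> R -> R) (w : R -> R) :
    (fun t => al (fun i => joinv (fun i => ws i t) (w t) (widen_ord (leqnSn p) i))
                 (joinv (fun i => ws i t) (w t) ord_max)) = (fun t => al (fun i => ws i t) (w t)).
  by apply: functional_extensionality => t; exact: joinv_comp.
by rewrite /u /u' /= !comp_eq.
Qed.

(* The junk value [y] is returned only when the composite is not in [Ro]; by [comp_rep]
   this does not happen where [ext_eq] is claimed. *)
Definition fr_comp p (q : 'I_p -> FR) (al : vec p -> R -> R) (y : FR) : FR :=
  match excluded_middle_informative (Ro (fun t => al (fun i => repr (q i) t) (repr y t))) with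
  | left H => mkFR H
  | right _ => y
  end.

Lemma ext_eq_fr_comp p (P : vec p -> Prop) V al (q : 'I_p -> FR) y :
  open_R V -> open_vec P -> P (fun i => std (q i)) -> V (std y) -> smooth_prod P V al ->
  ext_eq al q y (fr_comp q al y).
Proof.
move=> V_open P_open Pq Vy al_smooth qs ys Hq Hy.
have [Ro_comp req_comp] := comp_rep V_open P_open Pq Vy al_smooth Hq Hy.
rewrite /fr_comp; case: excluded_middle_informative => [H|[]]; first exact: mkFR_rep.
exact: (proj1 (comp_rep V_open P_open Pq Vy al_smooth (fun i => rep_repr (q i)) (rep_repr y))).
Qed.

(** * Intervals and charts *)

Definition std_above (a : FRbar) (s : R) : Prop :=
  match a with Fin A => std A < s | MInf => True | PInf => False end.

Definition std_below (b : FRbar) (s : R) : Prop :=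
  match b with Fin B => s < std B | PInf => True | MInf => False end.

Lemma FRbar_lt_std_above a y : std_above a (std y) -> FRbar_lt a (Fin y).
Proof.
case: a => [A|[]|_] /=; last by split => //; discriminate.
by move=> /FRlt_std [AY AYne]; split => //; congruence.
Qed.

Lemma FRbar_lt_std_below b y : std_below b (std y) -> FRbar_lt (Fin y) b.
Proof.
case: b => [B|_|[]] /=; last by split => //; discriminate.
by move=> /FRlt_std [YB YBne]; split => //; congruence.
Qed.

Lemma interval_lt k a b y : FRbar_lt a (Fin y) -> FRbar_lt (Fin y) b -> interval k a b y.
Proof. by case: k => -[ay ?] [yb ?]. Qed.

Lemma interval_std k a b y : std_above a (std y) -> std_below b (std y) -> interval k a b y.
Proof. by move=> /FRbar_lt_std_above ay /FRbar_lt_std_below yb; exact: interval_lt. Qed.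

Lemma interval_reaches_left k a b : std_lt a b ->
  forall A, a = Fin A -> exists X, interval k a b X /\ std X = std A.
Proof.
move=> + A a_A; rewrite a_A => Ab; exists (FRsqrt_shift A 1); rewrite std_FRsqrt_shift; split => //.
apply: interval_lt.
  split; first by apply: FRsqrt_shift_ge; lra.
  by move=> [E]; apply: (@FRsqrt_shift_neq A 1); [lra | rewrite -E].
by apply: FRbar_lt_std_below; rewrite std_FRsqrt_shift; case: b Ab.
Qed.

Lemma interval_reaches_right k a b : std_lt a b ->
  forall B, b = Fin B -> exists X, interval k a b X /\ std X = std B.
Proof.
move=> + B b_B; rewrite b_B => aB; exists (FRsqrt_shift B (-1)); rewrite std_FRsqrt_shift; split => //.
apply: interval_lt; last first.
  split; first by apply: FRsqrt_shift_le; lra.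
  by move=> [E]; apply: (@FRsqrt_shift_neq B (-1)); [lra | rewrite E].
by apply: FRbar_lt_std_above; rewrite std_FRsqrt_shift; case: a aB.
Qed.

Lemma open_and (V1 V2 : R -> Prop) : open_R V1 -> open_R V2 -> open_R (fun s => V1 s /\ V2 s).
Proof.
move=> V1_open V2_open r [V1r V2r].
have [e1 [e1_pos He1]] := V1_open r V1r; have [e2 [e2_pos He2]] := V2_open r V2r.
exists (Rmin e1 e2); split; first exact: Rmin_pos.
by move=> s rs; split; [apply: He1 | apply: He2]; [apply: Rlt_le_trans rs (Rmin_l _ _) | apply: Rlt_le_trans rs (Rmin_r _ _)].
Qed.

Lemma open_ball c e : open_R (fun s => Rabs (s - c) < e).
Proof.
move=> r cr; exists (e - Rabs (r - c)); split; first lra.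
by move=> s rs; have := Rabs_triang (s - r) (r - c); rewrite (_ : s - r + (r - c) = s - c); lra.
Qed.

Lemma open_std_above a : open_R (std_above a).
Proof.
case: a => [A||] r //= Ar; last by exists 1; split => //; lra.
exists (r - std A); split => [|s]; first lra.
by rewrite /Rabs; case: Rcase_abs => ? ?; lra.
Qed.

Lemma open_std_below b : open_R (std_below b).
Proof.
case: b => [B||] r //= rB; last by exists 1; split => //; lra.
exists (std B - r); split => [|s]; first lra.
by rewrite /Rabs; case: Rcase_abs => ? ?; lra.
Qed.

Definition chart (W : R -> Prop) (S : FR -> Prop) (f : FR -> FR) : Prop :=
  exists p (P : vec p -> Prop) (q : 'I_p -> FR) (al : vec p -> R -> R),
    open_vec P /\ P (fun i => std (q i)) /\ smooth_prod P W al /\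
    forall y, W (std y) -> S y -> ext_eq al q y (f y).

Lemma chart_of_smooth_on S f x : smooth_on S f -> S x ->
  exists V, open_R V /\ V (std x) /\ chart V S f.
Proof.
move=> Hf Sx; have [V [p [P [q [al [V_open [Vx [P_open [Pq [al_smooth Hal]]]]]]]]]] := Hf x Sx.
by exists V; split => //; split => //; exists p, P, q, al.
Qed.

Lemma smooth_on_of_charts S f :
  (forall x, S x -> exists V, open_R V /\ V (std x) /\ chart V S f) -> smooth_on S f.
Proof.
move=> Hcharts x Sx; have [V [V_open [Vx [p [P [q [al [P_open [Pq [al_smooth Hal]]]]]]]]]] := Hcharts x Sx.
by exists V, p, P, q, al.
Qed.

Lemma chart_sub (W W' : R -> Prop) S f : (forall s, W' s -> W s) -> chart W S f -> chart W' S f.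
Proof.
move=> W'W [p [P [q [al [P_open [Pq [[D [D_al [D_partial D_cont]]] Hal]]]]]]].
exists p, P, q, al; split => //; split => //; split; last by move=> y /W'W; exact: Hal.
exists D; split; first by move=> z [Pz /W'W Wz]; exact: D_al.
split; first by move=> l i z [Pz /W'W Wz]; exact: D_partial.
move=> l z [Pz /W'W Wz] eps eps_pos; have [d [d_pos Hd]] := D_cont l z (conj Pz Wz) eps eps_pos.
by exists d; split => // w [Pw /W'W Ww]; exact: Hd.
Qed.

Lemma chart_empty S f : chart (fun _ => False) S f.
Proof.
exists 0%N, (fun _ => True), (fun _ => mkFR (Ro_const 0)), (fun _ _ => 0).
split; first by move=> z _; exists 1; split => //; lra.
split => //; split; last by move=> y [].
exists (fun _ _ => 0); split; first by move=> z [_ []].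
by split; [move=> l i z [_ []] | move=> l z [_ []]].
Qed.

Lemma chart_congr W S T f g : chart W S f ->
  (forall y, W (std y) -> T y -> S y /\ g y = f y) -> chart W T g.
Proof.
move=> [p [P [q [al [P_open [Pq [al_smooth Hal]]]]]]] fg.
exists p, P, q, al; split => //; split => //; split => // y Wy Ty.
by have [Sy ->] := fg y Wy Ty; exact: Hal.
Qed.

Lemma chart_extend W S f : open_R W -> chart W S f ->
  exists g, (forall y, S y -> g y = f y) /\ chart W (fun _ => True) g.
Proof.
move=> W_open [p [P [q [al [P_open [Pq [al_smooth Hal]]]]]]].
exists (fun y => if excluded_middle_informative (S y) then f y else fr_comp q al y).
split=> [y Sy|]; first by case: excluded_middle_informative.
exists p, P, q, al; split => //; split => //; split => // y Wy _.
case: excluded_middle_informative => [Sy|nSy]; first exact: Hal.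
exact: ext_eq_fr_comp W_open P_open Pq Wy al_smooth.
Qed.

Definition end_ball (a : FRbar) (e : R) (s : R) : Prop :=
  if a is Fin A then Rabs (s - std A) < e else False.

Lemma open_end_ball a e : open_R (end_ball a e).
Proof. by case: a => [A||]; [exact: open_ball | move=> r [] | move=> r []]. Qed.

Lemma end_ball_chart S f a g : smooth_on S f ->
  (forall A, a = Fin A -> exists X, S X /\ std X = std A) -> 0 < g ->
  exists e, (0 < e <= g) /\ chart (end_ball a e) S f.
Proof.
move=> Hf a_reached g_pos.
case: a a_reached => [A||] a_reached; try by exists g; split; [lra | exact: chart_empty].
have [X [SX XA]] := a_reached A erefl.
have [V [V_open [VX ChV]]] := chart_of_smooth_on Hf SX.
have [e [e_pos He]] := V_open _ VX.
exists (Rmin e g); split; first by split; [exact: Rmin_pos | exact: Rmin_r].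
apply: chart_sub ChV => s /= sA; apply: He; rewrite XA.
exact: Rlt_le_trans sA (Rmin_l e g).
Qed.

(* Radius small enough for the balls around the two endpoints to be disjoint. *)
Definition end_radius (a b : FRbar) : R :=
  if (a, b) is (Fin A, Fin B) then (std B - std A) / 3 else 1.

Lemma end_radius_pos a b : std_lt a b -> 0 < end_radius a b.
Proof. by rewrite /end_radius; case: a => [A||]; case: b => [B||] //= ab; lra. Qed.

Lemma end_balls_disjoint a b ea eb s : std_lt a b -> ea <= end_radius a b -> eb <= end_radius a b ->
  end_ball a ea s -> end_ball b eb s -> False.
Proof.
rewrite /end_radius; case: a => [A||]; case: b => [B||] //= ab ea_le eb_le.
by rewrite /Rabs; do 2 case: Rcase_abs => ?; lra.
Qed.

Lemma std_between_end_balls a b d ea eb y : std_lt a b -> 0 < d -> d < ea -> d < eb ->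
  interval OO (FRbar_sub_real a d) (FRbar_add_real b d) y ->
  ~ end_ball a ea (std y) -> ~ end_ball b eb (std y) -> std_above a (std y) /\ std_below b (std y).
Proof.
move=> ab d_pos d_ea d_eb [[ay _] [yb _]] not_a not_b; split.
- case: a ab ay not_a => [A||] ab ay not_a /=; [|by case: b ab {yb not_b}|by []].
  move/FRle_std: ay; rewrite std_FRsub_real => Ay.
  by apply: Rnot_le_lt => yA; apply: not_a; rewrite /= /Rabs; case: Rcase_abs => ?; lra.
- case: b ab yb not_b => [B||] ab yb not_b /=; [|by []|by case: a ab {ay not_a}].
  move/FRle_std: yb; rewrite /FRbar_add_real std_FRsub_real => yB.
  by apply: Rnot_le_lt => By; apply: not_b; rewrite /= /Rabs; case: Rcase_abs => ?; lra.
Qed.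

Lemma interior_chart k a b f g d ea eb x :
  std_lt a b -> smooth_on (interval k a b) f -> (forall y, interval k a b y -> g y = f y) ->
  0 < d -> d < ea -> d < eb -> interval OO (FRbar_sub_real a d) (FRbar_add_real b d) x ->
  ~ end_ball a ea (std x) -> ~ end_ball b eb (std x) ->
  exists V, open_R V /\ V (std x) /\
    chart V (interval OO (FRbar_sub_real a d) (FRbar_add_real b d)) g.
Proof.
move=> ab Hf gf d_pos d_ea d_eb Ix not_a not_b.
have [xa xb] := std_between_end_balls ab d_pos d_ea d_eb Ix not_a not_b.
have [V [V_open [Vx ChV]]] := chart_of_smooth_on Hf (interval_std k xa xb).
exists (fun s => V s /\ std_above a s /\ std_below b s); split.
  by apply: open_and => //; apply: open_and; [exact: open_std_above | exact: open_std_below].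
split => //; apply: chart_congr (chart_sub (fun s => @proj1 _ _) ChV) _ => y [_ [ya yb]] _.
by have Jy := interval_std k ya yb; split; [|exact: gf].
Qed.

Unset Implicit Arguments.

Theorem lemma8 (a b : FRbar) (J : FR -> Prop) (f : FR -> FR) :
  noninf_interval J a b ->
  smooth_on J f ->
  exists (delta : R) (fbar : FR -> FR),
    0 < delta /\
    smooth_on (interval OO (FRbar_sub_real a delta) (FRbar_add_real b delta)) fbar /\
    (forall x, J x -> fbar x = f x).
Proof.
move=> [_ [ab [k ->]]] Hf.
have r_pos := end_radius_pos ab.
have [ea [[ea_pos ea_le] ChA]] := end_ball_chart Hf (interval_reaches_left k ab) r_pos.
have [eb [[eb_pos eb_le] ChB]] := end_ball_chart Hf (interval_reaches_right k ab) r_pos.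
have [gA [gA_f ChA']] := chart_extend (@open_end_ball a ea) ChA.
have [gB [gB_f ChB']] := chart_extend (@open_end_ball b eb) ChB.
pose fbar y := if excluded_middle_informative (end_ball a ea (std y)) then gA y else gB y.
have fbar_f y : interval k a b y -> fbar y = f y.
  by rewrite /fbar; case: excluded_middle_informative => [?|?] Jy; [exact: gA_f | exact: gB_f].
pose delta := Rmin ea eb / 2.
have := Rmin_l ea eb; have := Rmin_r ea eb; have := Rmin_pos _ _ ea_pos eb_pos => ? ? ?.
exists delta, fbar; split; first by rewrite /delta; lra.
split => //; apply: smooth_on_of_charts => x Ix.
case: (excluded_middle_informative (end_ball a ea (std x))) => [xA|not_a].
  exists (end_ball a ea); split; [exact: open_end_ball | split => //].
  apply: (chart_congr ChA') => y yA _; split => //; rewrite /fbar.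
  by case: excluded_middle_informative => // /(_ yA).
case: (excluded_middle_informative (end_ball b eb (std x))) => [xB|not_b].
  exists (end_ball b eb); split; [exact: open_end_ball | split => //].
  apply: (chart_congr ChB') => y yB _; split => //; rewrite /fbar.
  by case: excluded_middle_informative => // yA; case: (end_balls_disjoint ab ea_le eb_le yA yB).
by apply: interior_chart ab Hf fbar_f _ _ _ Ix not_a not_b; rewrite /delta; lra.
Qed.
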